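(* Let $(\mathcal{C},\psi)$ be a t-pair with $\mathcal{C}$ nonempty and $b,c\in\{i,d,a\}$. (a) If there is $n\in\mathbb{N}$ such that the set $\{\psi^b(T):T\in\mathcal{C},\psi^c(T)\le n\}$ is infinite, then $\operatorname{typ}(\mathcal{U}^{bc}_{\mathcal{C}\psi})=\epsilon$. (b) If there is no such $n$, then $\mathrm{Dom}(\mathcal{U}^{bc}_{\mathcal{C}\psi})=\{n\in\mathbb{N}:n\ge n_0\}$, where $n_0=\min\{\psi^c(T):T\in\mathcal{C}\}$.
   Context: Let $\mathbb{N}=\{0,1,2,\dots\}$; for an integer $k\ge 2$ let $E_k=\{0,1,\dots,k-1\}$; let $\mathcal{P}(\mathbb{N})$ be the set of nonempty finite subsets of $\mathbb{N}$. Let $F$ be a nonempty set (of attribute names). A decision table $T\in\mathcal{M}_k(F)$ is a rectangular table with $n\ge 1$ columns labeled with attributes $f_1,\dots,f_n\in F$ (any two columns labeled with the same attribute are equal), whose rows are pairwise different tuples from $E_k^n$ (the set of rows may be empty), each row being labeled with a set of decisions from $\mathcal{P}(\mathbb{N})$. Write $At(T)=\{f_1,\dots,f_n\}$ and $\Delta(T)$ for the set of rows. For a word $\alpha=(f_{i_1},\delta_1)\cdots(f_{i_m},\delta_m)$ with $f_{i_j}\in At(T)$, $\delta_j\in E_k$, the subtable $T\alpha$ consists of the rows of $T$ having value $\delta_j$ in column $f_{i_j}$ for all $j$ ($T\lambda=T$ for the empty word $\lambda$). Operations on tables: (1) removal of a column from a table with at least two columns (if groups of equal rows appear, only the first row of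 each group, with its decision set, is kept); (2) changing of decisions: the decision sets attached to rows are replaced arbitrarily by sets from $\mathcal{P}(\mathbb{N})$; (3) permutation of columns: swap two columns together with their attribute labels; (4) duplication of columns: add a copy of a column (with its label) next to it. A set $\mathcal{C}\subseteq\mathcal{M}_k(F)$ is a closed class if every table obtained from a table of $\mathcal{C}$ by finitely many such operations belongs to $\mathcal{C}$. A decision tree over $\mathcal{M}_k(F)$ is a finite directed tree with a root (unique node with no entering edge) and at least two nodes such that the root and the edges leaving the root are unlabeled, each worker node (neither root nor terminal) is labeled with an attribute from $F$, each edge leaving a worker node is labeled with a number from $E_k$, and each terminal node is labeled with a number from $\mathbb{N}$. For a complete path $\xi$ (root to terminal node) whose worker nodes are labeled $f_{j_1},\dots,f_{j_m}$ in order, with the edges leaving them labeled $\delta_1,\dots,\delta_m$, put $\pi(\xi)=(f_{j_1},\delta_1)\cdots(f_{j_m},\delta_m)$, $\varphi(\xi)=f_{j_1}\cdots f_{j_m}$ (both empty if $m=0$), and let $\tau(\xi)$ be the label of its terminal node. A nondeterministic decision tree for $T$ is a decision tree $\Gamma$ whose worker-node attributes lie in $At(T)$, such that $\bigcup_{\xi}\Delta(T\pi(\xi))=\Delta(T)$ (union over complete paths), and for every row $r\in\Delta(T)$ and every complete path $\xi$ with $r\in\Delta(T\pi(\xi))$, $\tau(\xi)$ belongs to the decision set of $r$. A decision tree is deterministic if exactly one edge leaves the root and the edges leaving each worker node have pairwise different labels; a deterministic decision tree for $T$ is a deterministic decision tree that is a nondeterministic decision tree for $T$. A complexity measure over $\mathcal{M}_k(F)$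 is any map $\psi:F^*\to\mathbb{N}$, where $F^*$ is the set of finite words over $F$ including the empty word $\lambda$. For a tree, $\psi(\Gamma)=\max_\xi\psi(\varphi(\xi))$ over complete paths. For $T$ with columns labeled $f_1,\dots,f_n$: $\psi^i(T)=\psi(f_1\cdots f_n)$, $\psi^d(T)$ is the minimum complexity of a deterministic decision tree for $T$, $\psi^a(T)$ the minimum complexity of a nondeterministic decision tree for $T$. A t-pair $(\mathcal{C},\psi)$ consists of a closed class $\mathcal{C}\subseteq\mathcal{M}_k(F)$ and a complexity measure $\psi$ over $\mathcal{M}_k(F)$. For $b,c\in\{i,d,a\}$ define the partial function $\mathcal{U}^{bc}_{\mathcal{C}\psi}(n)=\max\{\psi^b(T):T\in\mathcal{C},\psi^c(T)\le n\}$ (defined iff this set is nonempty and finite). For a partial function $g:\mathbb{N}\to\mathbb{N}$ with domain $\mathrm{Dom}(g)$, let $\mathrm{Dom}^+(g)=\{n\in\mathrm{Dom}(g):g(n)\ge n\}$, $\mathrm{Dom}^-(g)=\{n\in\mathrm{Dom}(g):g(n)\le n\}$. Its type $\operatorname{typ}(g)$ is: $\alpha$ if $\mathrm{Dom}(g)$ is infinite and $g$ is bounded above; $\beta$ if $\mathrm{Dom}(g)$ is infinite, $\mathrm{Dom}^+(g)$ is finite and $g$ is unbounded above; $\gamma$ if $\mathrm{Dom}^+(g)$ and $\mathrm{Dom}^-(g)$ are both infinite; $\delta$ if $\mathrm{Dom}(g)$ is infinite and $\mathrm{Dom}^-(g)$ is finite; $\epsilon$ if $\mathrm{Dom}(g)$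 is finite. *)

From mathcomp Require Import all_boot.
From mathcomp Require Import finmap.
From Stdlib Require Import ClassicalEpsilon Relations.
Set Implicit Arguments.
Unset Strict Implicit.
Unset Printing Implicit Defensive.

Local Open Scope fset_scope.

Fixpoint nth_opt (A : Type) (s : seq A) (i : nat) : option A :=
  match s, i with
  | [::], _ => None
  | x :: _, 0 => Some x
  | _ :: s', i'.+1 => nth_opt s' i'
  end.

(* the least element of a set of naturals (well defined when the set is nonempty) *)
Definition nat_min (P : nat -> Prop) : nat :=
  epsilon (inhabits 0) (fun m => P m /\ forall m', P m' -> m <= m').
(* the greatest element of a set of naturals (well defined when nonempty and finite) *)
Definition nat_max (P : nat -> Prop) : nat :=
  epsilon (inhabits 0) (fun m => P m /\ forall m', P m' -> m' <= m).

Definition finite_set (P : nat -> Prop) : Prop :=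
  exists s : seq nat, forall x, P x -> x \in s.

(* A table: sequence of column attributes f_1..f_n and the (ordered) sequence of rows,
   each row being a tuple (seq nat) with its decision set (a finite set of naturals). *)
Record table (F : Type) := Table {
  attrs : seq F ;
  rows : seq (seq nat * {fset nat}) }.

Section Tables.
Variable F : Type.
Implicit Types (T : table F).

Definition same_label_cols_equal T : Prop :=
  forall i j f, nth_opt (attrs T) i = Some f -> nth_opt (attrs T) j = Some f ->
    forall r, r \in rows T -> nth 0 r.1 i = nth 0 r.1 j.

Definition wf_table (k : nat) T : Prop :=
  [/\ 0 < size (attrs T),
      (forall r, r \in rows T ->
         [/\ size r.1 = size (attrs T), all (fun x => x < k) r.1 & r.2 != fset0]),
      uniq (map fst (rows T)) &
      same_label_cols_equal T].

Definition row_in_sub T (alpha : seq (F * nat)) (r : seq nat * {fset nat}) : Prop :=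
  forall p, List.In p alpha ->
    forall i, nth_opt (attrs T) i = Some p.1 -> nth 0 r.1 i = p.2.

Fixpoint dedup_aux (seen : seq (seq nat)) (rs : seq (seq nat * {fset nat})) :=
  match rs with
  | [::] => [::]
  | r :: rs' => if r.1 \in seen then dedup_aux seen rs'
                else r :: dedup_aux (r.1 :: seen) rs'
  end.
Definition dedup_first rs := dedup_aux [::] rs.

Definition remove_at (A : Type) (j : nat) (s : seq A) := take j s ++ drop j.+1 s.
Definition dup_at (A : Type) (i : nat) (s : seq A) := take i.+1 s ++ drop i s.
Definition swap_at (A : Type) (i j : nat) (s : seq A) :=
  pmap (fun x => nth_opt s (if x == i then j else if x == j then i else x))
       (iota 0 (size s)).

Definition remove_col (j : nat) T : table F :=
  Table (remove_at j (attrs T))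
        (dedup_first [seq (remove_at j r.1, r.2) | r <- rows T]).
Definition swap_cols (i j : nat) T : table F :=
  Table (swap_at i j (attrs T)) [seq (swap_at i j r.1, r.2) | r <- rows T].
Definition dup_col (i : nat) T : table F :=
  Table (dup_at i (attrs T)) [seq (dup_at i r.1, r.2) | r <- rows T].

Inductive op_step : table F -> table F -> Prop :=
| OpRemove T j : 1 < size (attrs T) -> j < size (attrs T) -> op_step T (remove_col j T)
| OpChange T T' : attrs T' = attrs T -> map fst (rows T') = map fst (rows T) ->
    (forall r, r \in rows T' -> r.2 != fset0) -> op_step T T'
| OpSwap T i j : i < size (attrs T) -> j < size (attrs T) -> op_step T (swap_cols i j T)
| OpDup T i : i < size (attrs T) -> op_step T (dup_col i T).

Definition closed_class (k : nat) (C : table F -> Prop) : Prop :=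
  (forall T, C T -> wf_table k T) /\
  (forall T T', C T -> clos_refl_trans _ op_step T T' -> C T').

(* non-root nodes: terminal nodes (labelled by a number) and worker nodes (labelled by an
   attribute, with labelled outgoing edges); the root is unlabelled with unlabelled edges *)
Inductive node := Leaf of nat | Work of F & seq (nat * node).
Record dtree := DTree { root_children : seq node }.

Fixpoint npaths (t : node) : seq (seq (F * nat) * nat) :=
  match t with
  | Leaf d => [:: ([::], d)]
  | Work f ch =>
      (fix go (ch : seq (nat * node)) :=
         match ch with
         | [::] => [::]
         | (e, t') :: ch' => [seq ((f, e) :: p.1, p.2) | p <- npaths t'] ++ go ch'
         end) ch
  end.
Definition tpaths (G : dtree) := flatten (map npaths (root_children G)).

Fixpoint node_ok (k : nat) (det : bool) (P : F -> Prop) (t : node) : Prop :=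
  match t with
  | Leaf _ => True
  | Work f ch =>
      [/\ P f, ch <> [::], (det -> uniq (map fst ch)) &
        (fix go (ch : seq (nat * node)) :=
           match ch with
           | [::] => True
           | (e, t') :: ch' => e < k /\ node_ok k det P t' /\ go ch'
           end) ch]
  end.

Definition tree_ok (k : nat) (det : bool) (P : F -> Prop) (G : dtree) : Prop :=
  [/\ root_children G <> [::], (det -> size (root_children G) = 1) &
      forall t, List.In t (root_children G) -> node_ok k det P t].

Definition is_tree_for (k : nat) (det : bool) T (G : dtree) : Prop :=
  [/\ tree_ok k det (fun f => List.In f (attrs T)) G,
      (forall r, r \in rows T -> exists p, List.In p (tpaths G) /\ row_in_sub T p.1 r) &
      (forall r, r \in rows T -> forall p, List.In p (tpaths G) ->
          row_in_sub T p.1 r -> p.2 \in r.2)].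

Definition psi_tree (psi : seq F -> nat) (G : dtree) : nat :=
  \max_(p <- tpaths G) psi (map fst p.1).

Definition psi_i (psi : seq F -> nat) T : nat := psi (attrs T).
Definition psi_d (k : nat) (psi : seq F -> nat) T : nat :=
  nat_min (fun m => exists G, is_tree_for k true T G /\ psi_tree psi G = m).
Definition psi_a (k : nat) (psi : seq F -> nat) T : nat :=
  nat_min (fun m => exists G, is_tree_for k false T G /\ psi_tree psi G = m).
End Tables.

Inductive mkind := Ki | Kd | Ka.

Definition psi_of (F : Type) (k : nat) (psi : seq F -> nat) (b : mkind) (T : table F) :=
  match b with Ki => psi_i psi T | Kd => psi_d k psi T | Ka => psi_a k psi T end.

Record pfun := PFun { pdom : nat -> Prop ; pval : nat -> nat }.

Definition dom_plus (g : pfun) := fun n => pdom g n /\ n <= pval g n.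
Definition dom_minus (g : pfun) := fun n => pdom g n /\ pval g n <= n.

Inductive ftype := TAlpha | TBeta | TGamma | TDelta | TEps.

Definition has_typ (g : pfun) (t : ftype) : Prop :=
  match t with
  | TAlpha => ~ finite_set (pdom g) /\ exists B, forall n, pdom g n -> pval g n <= B
  | TBeta => [/\ ~ finite_set (pdom g), finite_set (dom_plus g) &
                 ~ exists B, forall n, pdom g n -> pval g n <= B]
  | TGamma => ~ finite_set (dom_plus g) /\ ~ finite_set (dom_minus g)
  | TDelta => ~ finite_set (pdom g) /\ finite_set (dom_minus g)
  | TEps => finite_set (pdom g)
  end.

Definition Uset (F : Type) (k : nat) (C : table F -> Prop) (psi : seq F -> nat)
  (b c : mkind) (n : nat) : nat -> Prop :=
  fun m => exists T, [/\ C T, psi_of k psi c T <= n & psi_of k psi b T = m].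

Definition U_fun (F : Type) (k : nat) (C : table F -> Prop) (psi : seq F -> nat)
  (b c : mkind) : pfun :=
  PFun (fun n => (exists m, Uset k C psi b c n m) /\ finite_set (Uset k C psi b c n))
       (fun n => nat_max (Uset k C psi b c n)).

(* Idea: the set {psi^b(T) : T in C, psi^c(T) <= n} grows with n.  Hence once it is
   infinite for some n0 it stays infinite for all n >= n0, so U is defined only below n0;
   and when it is always finite, U is defined exactly where the set is nonempty, i.e. from
   the least complexity psi^c attained on C onwards. *)
From Stdlib Require Import ClassicalEpsilon.
From mathcomp Require Import all_boot.

Set Implicit Arguments.
Unset Strict Implicit.

Lemma nat_minP (P : nat -> Prop) : (exists n, P n) ->
  P (nat_min P) /\ forall m, P m -> nat_min P <= m.
Proof.
move=> exP; apply: (epsilon_spec (inhabits 0) (fun m => P m /\ _)).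
pose p n : bool := excluded_middle_informative (P n).
have pP n : reflect (P n) (p n).
  by rewrite /p; case: excluded_middle_informative => h; constructor.
have exp : exists n, p n by case: exP => n /pP; exists n.
case: (ex_minnP exp) => m /pP Pm minm.
by exists m; split=> // m' /pP; apply: minm.
Qed.

Lemma finite_set_sub (P Q : nat -> Prop) :
  (forall x, P x -> Q x) -> finite_set Q -> finite_set P.
Proof. by move=> PQ [s Qs]; exists s => x /PQ /Qs. Qed.

Lemma finite_set_bounded (P : nat -> Prop) (N : nat) :
  (forall x, P x -> x < N) -> finite_set P.
Proof. by move=> ltPN; exists (iota 0 N) => x /ltPN; rewrite mem_iota. Qed.

Section Uset.
Variables (F : Type) (k : nat) (C : table F -> Prop) (psi : seq F -> nat) (b c : mkind).

Local Notation U := (Uset k C psi b c).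

Definition min_complexity : nat :=
  nat_min (fun m => exists T, C T /\ psi_of k psi c T = m).

Lemma Uset_mono n n' m : n <= n' -> U n m -> U n' m.
Proof. by move=> lenn' [T [CT lecn <-]]; exists T; split=> //; apply: leq_trans lenn'. Qed.

Lemma Uset_infinite_mono n n' : n <= n' -> ~ finite_set (U n) -> ~ finite_set (U n').
Proof.
move=> lenn' infn finn'; apply: infn.
by apply: finite_set_sub finn' => m; apply: Uset_mono.
Qed.

Lemma Uset_nonempty_iff n : (exists T, C T) ->
  (exists m, U n m) <-> min_complexity <= n.
Proof.
case=> T0 CT0; rewrite /min_complexity.
have [[T [CT eqT]] minP] := @nat_minP (fun m => exists T, C T /\ psi_of k psi c T = m)
  (ex_intro _ _ (ex_intro _ T0 (conj CT0 erefl))).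
split.
- by case=> _ [T' [CT' lecn _]]; apply: leq_trans lecn; apply: minP; exists T'.
- by move=> len; exists (psi_of k psi b T), T; rewrite eqT.
Qed.

Lemma U_fun_dom_bounded n0 :
  ~ finite_set (U n0) -> forall n, pdom (U_fun k C psi b c) n -> n < n0.
Proof.
move=> infn0 n [_ finn]; rewrite ltnNge; apply/negP => len0n.
exact: Uset_infinite_mono len0n infn0 finn.
Qed.

End Uset.

Theorem lemma2 (F : Type) (HF : inhabited F) (k : nat) (hk : 2 <= k)
  (C : table F -> Prop) (psi : seq F -> nat) (b c : mkind)
  (hC : closed_class k C) (hne : exists T, C T) :
  ((exists n, ~ finite_set (Uset k C psi b c n)) ->
     has_typ (U_fun k C psi b c) TEps) /\
  (~ (exists n, ~ finite_set (Uset k C psi b c n)) ->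
     forall n, pdom (U_fun k C psi b c) n <->
               nat_min (fun m => exists T, C T /\ psi_of k psi c T = m) <= n).
Proof.
split.
- by case=> n0 infn0; apply: finite_set_bounded (U_fun_dom_bounded infn0).
- move=> all_finite n; rewrite -(Uset_nonempty_iff k psi b c n hne) /=.
  split=> [[] // | nonempty]; split=> //.
  by apply: NNPP => infn; apply: all_finite; exists n.
Qed.
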